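(* (i) For $x\notin\bigcup_{q\ge1}\mathrm{Fix}_q(\sigma)^\circ$, $\omega_x$ is a hermitian character of $C(X)'_{00}$ which is continuous in the topology induced by the norm of $\ell^1(\Sigma)$. (ii) Let $x\in\bigcup_{q\ge1}\mathrm{Fix}_q(\sigma)^\circ$ and $c\in\mathbb{C}\setminus\{0\}$. Then the following are equivalent: (a) $\omega_{x,c}$ is continuous on $C(X)'_{00}$ in the topology induced by $\ell^1(\Sigma)$; (b) $\omega_{x,c}$ is a hermitian character of $C(X)'_{00}$; (c) $c\in\mathbb{T}$.
   Context: Let $X$ be a non-empty compact Hausdorff space and $\sigma:X\to X$ a homeomorphism; $\mathrm{Fix}_k(\sigma)=\{x:\sigma^kx=x\}$, superscript $\circ$ denotes interior, $\mathrm{supp}(f)$ the closure of $\{f\ne0\}$. $C(X)$ is the algebra of continuous complex functions with sup norm, $\alpha(f)=f\circ\sigma^{-1}$. $\ell^1(\Sigma)$ is the set of $\ell:\mathbb{Z}\to C(X)$ with $\|\ell\|=\sum_k\|\ell(k)\|_\infty<\infty$, product $(\ell\ell')(n)=\sum_k\ell(k)\alpha^k(\ell'(n-k))$, involution $\ell^*(n)=\overline{\alpha^n(\ell(-n))}$; elements are written $\sum_kf_k\delta^k$ with $f_k=\ell(k)$, and $C(X)$ is embedded as $\{f\delta^0\}$. $c_{00}(\Sigma)$ is the $*$-subalgebra of finite sums and $C(X)'_{00}$ is the commutant of $C(X)$ in it, equal to $\{\sum_kf_k\delta^k\in c_{00}(\Sigma):\mathrm{supp}(f_k)\subset\mathrm{Fix}_k(\sigma)\}$.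 For $x\notin\bigcup_{q\ge1}\mathrm{Fix}_q(\sigma)^\circ$, $\omega_x(\sum_kf_k\delta^k)=f_0(x)$; for $x\in\bigcup_{q\ge1}\mathrm{Fix}_q(\sigma)^\circ$ and $c\ne0$, $\omega_{x,c}(\sum_kf_k\delta^k)=\sum_jf_{jn}(x)c^j$, with $n$ the minimal $n\ge1$ such that $x\in\mathrm{Fix}_n(\sigma)^\circ$; these are characters of $C(X)'_{00}$. A character $\omega$ is hermitian if $\omega(a^* )=\overline{\omega(a)}$ for all $a$. *)

(* Complex numbers: R[i] (real_closed
   complex.v) over an abstract R : realType, seen as a numClosedFieldType so
   that MathComp-Analysis endows it with its norm topology. *)
From HB Require Import structures.
From mathcomp Require Import all_boot all_order all_algebra.
From mathcomp Require Import all_classical all_reals all_analysis.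
From mathcomp Require Import complex.
Import Order.TTheory GRing.Theory Num.Theory.
Import numFieldNormedType.Exports.

Set Implicit Arguments.
Unset Strict Implicit.
Unset Printing Implicit Defensive.

Local Open Scope ring_scope.
Local Open Scope classical_set_scope.

Definition CC (R : realType) : numClosedFieldType := R[i].

Definition cabs (R : realType) (z : CC R) : R := complex.Re `|z|.

Section CrossedProduct.
Variables (R : realType) (X : topologicalType) (sigma sigmai : X -> X).
(* sigmai is the inverse of the homeomorphism sigma *)

Definition iterz (k : int) : X -> X :=
  match k with
  | Posz n => iter n sigma
  | Negz n => iter n.+1 sigmai
  end.

Definition Fix (q : nat) : set X := [set x | iter q sigma x = x].

Definition supnorm (f : X -> CC R) : R := sup [set cabs (f x) | x in [set: X]].

(* elements  sum_k f_k delta^k  are represented by  k |-> f_k *)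
Definition elt := int -> X -> CC R.

Definition c00 (a : elt) : Prop :=
  (forall k, continuous (a k)) /\ finite_set [set k | exists x, a k x != 0].

Definition l1norm (a : elt) : R := \sum_(k \in [set: int]) supnorm (a k).

Definition eadd (a b : elt) : elt := fun k x => a k x + b k x.
Definition escale (l : CC R) (a : elt) : elt := fun k x => l * a k x.
Definition esub (a b : elt) : elt := fun k x => a k x - b k x.

(* alpha^k(g) = g o sigma^{-k};
   (a b)(n) = sum_k a(k) alpha^k(b(n-k)) *)
Definition emul (a b : elt) : elt :=
  fun n x => \sum_(k \in [set: int]) (a k x * b (n - k) (iterz (- k) x)).

Definition estar (a : elt) : elt :=
  fun n x => (a (- n) (iterz (- n) x))^*.

Definition emb (f : X -> CC R) : elt :=
  fun k => if k == 0 then f else fun=> 0.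

Definition commutant00 (a : elt) : Prop :=
  c00 a /\ forall f : X -> CC R, continuous f -> emul (emb f) a = emul a (emb f).

Definition is_character (A : elt -> Prop) (w : elt -> CC R) : Prop :=
  [/\ forall a b, A a -> A b -> w (eadd a b) = w a + w b,
      forall l a, A a -> w (escale l a) = l * w a,
      forall a b, A a -> A b -> w (emul a b) = w a * w b
    & exists2 a, A a & w a != 0].

Definition is_hermitian_character (A : elt -> Prop) (w : elt -> CC R) : Prop :=
  is_character A w /\ forall a, A a -> w (estar a) = (w a)^*.

Definition l1_continuous_on (A : elt -> Prop) (w : elt -> CC R) : Prop :=
  forall a, A a -> forall e : R, 0 < e ->
    exists2 d : R, 0 < d &
      forall b, A b -> l1norm (esub b a) < d -> cabs (w b - w a) < e.

Definition omega_x (x : X) (w : elt) : CC R := w 0 x.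

Definition omega_xc (x : X) (n : nat) (c : CC R) (a : elt) : CC R :=
  \sum_(j \in [set: int]) (a (j * n%:Z) x * c ^ j).

End CrossedProduct.

(* An element a = sum_k a_k delta^k of c_00(Sigma) commutes with C(X) iff every
   a_k vanishes off Fix_k(sigma): Urysohn functions separate y from sigma^-k y.  As
   a_k is continuous, a_k(x) <> 0 then puts x in the interior of Fix_|k|(sigma).
   Outside every Fix_q(sigma)^o only a_0(x) survives, so omega_x evaluates the 0-th
   coefficient at x: a hermitian character bounded by the l^1 norm.  If n is the least
   q with x in Fix_q(sigma)^o, the interior of Fix_n /\ Fix_k is inside Fix_gcd(n,k),
   so a_k(x) = 0 unless n | k; at x the coefficients a_jn(x) then multiply like those
   of a Laurent polynomial in delta^n, and omega_(x,c) evaluates it at c.  The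
   involution turns c into (c^-1)^*, so omega_(x,c) is hermitian iff c^* = c^-1;
   testing l^1-continuity at 0 on small multiples of g delta^jn, with g a bump at x
   supported in Fix_n(sigma)^o, bounds |c|^j uniformly in j in Z.  Both say |c| = 1. *)

From HB Require Import structures.
From mathcomp Require Import all_boot all_order all_algebra.
From mathcomp Require Import all_classical all_reals all_analysis.
From mathcomp Require Import complex finmap.
Import Order.TTheory GRing.Theory Num.Theory.
Import numFieldNormedType.Exports.
Local Open Scope ring_scope.
Local Open Scope classical_set_scope.
Set Implicit Arguments.
Unset Strict Implicit.
Unset Printing Implicit Defensive.

Lemma ler_sum_fsubset (R : numDomainType) (I : choiceType) (A B : {fset I})
    (F : I -> R) :
  (forall i, 0 <= F i) -> (A `<=` B)%fset -> \sum_(i <- A) F i <= \sum_(i <- B) F i.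
Proof.
move=> F0 AB; rewrite [leRHS](big_fsetID _ (mem A)) /=.
have -> : [fset i in B | i \in A]%fset = A.
  by apply/fsetP => i; rewrite !inE andbC; case: (boolP (i \in A)) => // /(fsubsetP AB).
by rewrite lerDl sumr_ge0.
Qed.

Lemma exists_expr_lt (R : realType) (t eps : R) : 0 <= t -> t < 1 -> 0 < eps ->
  exists k : nat, t ^+ k < eps.
Proof.
move=> t0 t1 e0; have /cvgrPdist_lt/(_ _ e0) : (GRing.exp t : R ^nat) @ \oo --> 0.
  by apply: cvg_expr; rewrite ger0_norm.
case=> N _ /(_ N (leqnn N)); rewrite /= sub0r normrN ger0_norm ?exprn_ge0 //.
by exists N.
Qed.

Lemma powz_bounded_eq1 (R : realType) (s eps : R) : 0 < s -> 0 < eps ->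
  (forall j : int, eps * s ^ j < 1) -> s = 1.
Proof.
move=> s0 e0 hb; have [s1|s1|//] := ltgtP s 1.
- have [k hk] := exists_expr_lt (ltW s0) s1 e0.
  have := hb (- k%:Z); rewrite -exprnN ltr_pdivrMr ?exprn_gt0 // mul1r.
  by move=> /(lt_trans hk); rewrite ltxx.
- have [k hk] : exists k : nat, s^-1 ^+ k < eps.
    by apply: exists_expr_lt; rewrite ?invr_ge0 ?ltW ?invf_lt1.
  move: hk; rewrite exprVn -[_^-1]mul1r ltr_pdivrMr ?exprn_gt0 ?(lt_trans ltr01) //.
  by move=> /lt_trans/(_ (hb k)); rewrite ltxx.
Qed.

Section ComplexModulus.
Variable R : realType.
Implicit Types (z w : CC R) (r : R).

Lemma cabs_normc z : cabs z = Normc.normc z.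
Proof. by case: z. Qed.

Lemma normr_cabs z : `|z| = (cabs z)%:C%C.
Proof. by rewrite cabs_normc normc_def; case: z. Qed.

Lemma normr_real_complex r : `|r%:C%C : CC R| = `|r|%:C%C.
Proof. by rewrite normc_def /= expr0n addr0 sqrtr_sqr. Qed.

Lemma cabs_ge0 z : 0 <= cabs z.
Proof. by rewrite cabs_normc; case: z => a b; exact: sqrtr_ge0. Qed.

Lemma ler_cabsD z w : cabs (z + w) <= cabs z + cabs w.
Proof. by rewrite !cabs_normc; exact: le_normcD. Qed.

Lemma cabsM z w : cabs (z * w) = cabs z * cabs w.
Proof. by rewrite !cabs_normc; exact: Normc.normcM. Qed.

Lemma cabsV z : cabs z^-1 = (cabs z)^-1.
Proof. by rewrite !cabs_normc; exact: Normc.normcV. Qed.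

Lemma cabs0 : cabs (0 : CC R) = 0.
Proof. by rewrite cabs_normc Normc.normc0. Qed.

Lemma cabs1 : cabs (1 : CC R) = 1.
Proof. by rewrite cabs_normc Normc.normc1. Qed.

Lemma cabs_eq0 z : (cabs z == 0) = (z == 0).
Proof.
by rewrite -[z == 0]normr_eq0 normr_cabs -(rmorph0 (real_complex R)) (inj_eq (@complexI R)).
Qed.

Lemma ger0_cabs r : 0 <= r -> cabs r%:C%C = r.
Proof. by move=> r0; rewrite /cabs normr_real_complex ger0_norm. Qed.

Lemma cabsX z k : cabs (z ^+ k) = cabs z ^+ k.
Proof. by elim: k => [|k IH]; rewrite ?cabs1 // !exprS cabsM IH. Qed.

Lemma cabsXz z (j : int) : cabs (z ^ j) = cabs z ^ j.
Proof. by case: j => k; rewrite /= ?cabsV cabsX. Qed.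

Lemma ler_cabs_sum (I : Type) (s : seq I) (F : I -> CC R) :
  cabs (\sum_(i <- s) F i) <= \sum_(i <- s) cabs (F i).
Proof.
elim: s => [|i s IH]; first by rewrite !big_nil cabs0.
by rewrite !big_cons (le_trans (ler_cabsD _ _)) // lerD2l.
Qed.

Lemma ler_dist_cabs z w : `|cabs z - cabs w| <= cabs (z - w).
Proof.
rewrite -lecR -normr_real_complex rmorphB /= -!normr_cabs.
exact: ler_dist_dist.
Qed.

Lemma continuous_real_complex : continuous (fun r : R => r%:C%C : CC R).
Proof.
move=> t; apply/cvgrPdist_lt => e; rewrite ltcE /= => /andP[/eqP Ie e0].
near=> r; rewrite -rmorphB normr_real_complex ltcE /= Ie eqxx /=.
by near: r; move/cvgrPdist_lt: (@cvg_id _ (nbhs t)); apply.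
Unshelve. all: end_near.
Qed.

Lemma continuous_cabs : continuous (@cabs R).
Proof.
move=> z; apply/(@cvgrPdist_lt _ _ _ (nbhs z) (nbhs_filter z)) => e e0.
exists e%:C%C; first by rewrite /= ltcR.
move=> w; rewrite /ball_ /= normr_cabs ltcR.
exact: le_lt_trans (ler_dist_cabs _ _).
Qed.

End ComplexModulus.

Section CompactSpace.
Variables (R : realType) (X : topologicalType).
Hypotheses (hX : hausdorff_space X) (cX : compact [set: X]) (nX : [set: X] !=set0).
Implicit Types f : X -> CC R.

Lemma continuous_bounded f : continuous f -> exists M, forall x, cabs (f x) <= M.
Proof.
move=> cf; have cc : compact [set cabs (f x) | x in [set: X]].
  apply: continuous_compact => //; apply: continuous_subspaceT => x.
  exact: continuous_comp (cf x) (@continuous_cabs R _).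
have [M [_ HM]] := compact_bounded cc; exists (`|M| + 1) => x.
have Mlt : M < `|M| + 1 by rewrite (le_lt_trans (ler_norm M)) // ltrDl.
by apply: le_trans (ler_norm _) (HM _ Mlt _ _); exists x.
Qed.

Lemma supnorm_ub f : continuous f -> forall x, cabs (f x) <= supnorm f.
Proof.
move=> cf x; have [M HM] := continuous_bounded cf.
by apply: ub_le_sup; [exists M => _ [y _ <-] | exists x].
Qed.

Lemma supnorm_le f M : (forall x, cabs (f x) <= M) -> supnorm f <= M.
Proof.
move=> HM; have [x0 _] := nX.
by apply: ge_sup; [exists (cabs (f x0)), x0 | move=> _ [y _ <-]].
Qed.

Lemma supnorm_ge0 f : 0 <= supnorm f.
Proof.
have [x0 _] := nX; rewrite /supnorm.
have [[M HM]|nub] := pselect (has_ubound [set cabs (f x) | x in [set: X]]).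
  by apply: le_trans (cabs_ge0 (f x0)) _; apply: ub_le_sup; [exists M | exists x0].
by rewrite sup_out // => -[_ ub]; apply: nub.
Qed.

Lemma supnorm0 f : (forall x, f x = 0) -> supnorm f = 0.
Proof.
move=> f0; apply/eqP; rewrite eq_le supnorm_ge0 andbT.
by apply: supnorm_le => x; rewrite f0 cabs0.
Qed.

Lemma urysohn_complex (A B : set X) : closed A -> closed B -> A `&` B = set0 ->
  exists f : X -> CC R, [/\ continuous f, forall x, cabs (f x) <= 1,
     forall x, A x -> f x = 0 & forall x, B x -> f x = 1].
Proof.
move=> cA cB AB; have nrm := compact_normal hX cX.
have /(@uniform_separatorP X R) [g [cg g01 gA gB]] :=
  (@normal_separatorP R X).1 nrm A B cA cB AB.
exists (fun x => (g x)%:C%C); split.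
- by move=> x; exact: continuous_comp (cg x) (@continuous_real_complex R _).
- move=> x; have : `[0, 1]%classic (g x) by apply: g01; exists x.
  by rewrite /= in_itv /= => /andP[g0 g1]; rewrite ger0_cabs.
- by move=> x Ax; rewrite (gA (g x)) ?rmorph0 //; exists x.
- by move=> x Bx; rewrite (gB (g x)) ?rmorph1 //; exists x.
Qed.

Lemma closed_set1 (x : X) : closed [set x].
Proof. exact: (accessible_closed_set1 (hausdorff_accessible hX)). Qed.

End CompactSpace.

Section Periods.
Variables (X : topologicalType) (sigma sigmai : X -> X).
Hypotheses (sigmaK : cancel sigma sigmai) (sigmaiK : cancel sigmai sigma).
Local Notation iterz := (iterz sigma sigmai).

Lemma Fix_iter_sigmai k z : iter k sigmai z = z <-> Fix sigma k z.
Proof.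
have iterK : forall (f g : X -> X), cancel f g -> cancel (iter k f) (iter k g).
  by move=> f g fK; elim: k => // k IH y; rewrite iterSr /= fK IH.
by rewrite /Fix /=; split=> zk; rewrite -{1}zk; apply: iterK.
Qed.

Lemma iterzN_Fix (m : int) z : iterz (- m) z = z <-> Fix sigma `|m|%N z.
Proof. by case: m => [[|k]|k] //; exact: Fix_iter_sigmai k.+1 z. Qed.

Lemma Fix_mul k j : Fix sigma k `<=` Fix sigma (j * k).
Proof. by move=> z zk; rewrite /Fix /= iterM; elim: j => //= j ->. Qed.

Lemma Fix_gcd a b : (0 < a)%N -> Fix sigma a `&` Fix sigma b `<=` Fix sigma (gcdn a b).
Proof.
move=> a0 z [za zb]; have [u _ /dvdnP[t ht]] := Bezoutl b a0.
have : Fix sigma (gcdn a b + u * b) z by rewrite ht; exact: Fix_mul.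
by rewrite /Fix /= iterD Fix_mul.
Qed.

Lemma iterzN_mul_Fix n (j : int) z : Fix sigma n z -> iterz (- (j * n%:Z)) z = z.
Proof. by move=> zn; apply/iterzN_Fix; rewrite abszM; exact: Fix_mul. Qed.

End Periods.

Section Commutant.
Variables (R : realType) (X : topologicalType) (sigma sigmai : X -> X).
Hypotheses (hX : hausdorff_space X) (cX : compact [set: X])
  (sigmaK : cancel sigma sigmai) (sigmaiK : cancel sigmai sigma).
Local Notation elt := (elt R X).
Local Notation iterz := (iterz sigma sigmai).
Local Notation emul := (emul sigma sigmai).
Local Notation commutant00 := (commutant00 sigma sigmai).
Implicit Types (a b : elt) (f : X -> CC R).

Lemma emul_embl f a m y : emul (emb f) a m y = f y * a m y.
Proof.
rewrite /emul (fsbigTE [fset 0%Z]%fset) ?big_seq_fset1 => [|k].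
  by rewrite /emb eqxx subr0 oppr0.
by rewrite inE => /negbTE k0; rewrite /emb k0 mul0r.
Qed.

Lemma emul_embr a f m y : emul a (emb f) m y = a m y * f (iterz (- m) y).
Proof.
rewrite /emul (fsbigTE [fset m]%fset) ?big_seq_fset1 => [|k].
  by rewrite /emb subrr eqxx.
by rewrite inE => km; rewrite /emb subr_eq0 eq_sym (negbTE km) mulr0.
Qed.

Lemma commutant00P a :
  commutant00 a <-> c00 a /\ forall m y, a m y != 0 -> iterz (- m) y = y.
Proof.
split=> [[ca acomm]|[ca afix]].
  split=> // m y amy; apply/eqP; apply: contraNT amy => yz.
  have sep : [set y] `&` [set iterz (- m) y] = set0.
    by apply/seteqP; split=> t // [-> ty]; rewrite -ty eqxx in yz.
  have [f [cf _ f0 f1]] :=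
    urysohn_complex R hX cX (@closed_set1 _ hX y) (@closed_set1 _ hX _) sep.
  have := congr1 (fun b => b m y) (acomm f cf).
  by rewrite /= emul_embl emul_embr f0 // f1 // mul0r mulr1 => <-.
split=> // f cf; apply/funext => m; apply/funext => y; rewrite emul_embl emul_embr.
by have [->|/afix ->] := eqVneq (a m y) 0; rewrite ?mulr0 ?mul0r // mulrC.
Qed.

Lemma commutant00_interior_Fix a m y : commutant00 a -> a m y != 0 ->
  interior (Fix sigma `|m|%N) y.
Proof.
move=> /commutant00P[ca afix] amy; rewrite /interior /=.
apply: (@filterS _ _ _ [set t | 0 < cabs (a m t)]) => [t /= amt|].
  by apply/(iterzN_Fix sigmaK sigmaiK)/afix; rewrite -cabs_eq0 gt_eqF.
apply: open_nbhs_nbhs; split; last by rewrite /= lt0r cabs_eq0 amy cabs_ge0.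
apply: (@open_comp _ _ (fun t => cabs (a m t)) [set r : R | 0 < r]).
  by move=> t _; exact: continuous_comp (ca.1 m t) (@continuous_cabs R _).
exact: open_gt.
Qed.

End Commutant.

Section FiniteSupport.
Variables (R : realType) (X : topologicalType).
Hypotheses (cX : compact [set: X]) (nX : [set: X] !=set0).
Implicit Types (a b d : elt R X).

Definition coef_support a : {fset int} := fset_set [set k | exists x, a k x != 0].

Lemma mem_coef_support a k x : c00 a -> a k x != 0 -> k \in coef_support a.
Proof. by move=> [_ fa] akx; rewrite in_fset_set //; apply/mem_set; exists x. Qed.

Lemma coef_support_out a k x : c00 a -> k \notin coef_support a -> a k x = 0.
Proof. by move=> ca; apply: contraNeq; exact: mem_coef_support. Qed.

Lemma c00B a b : c00 a -> c00 b -> c00 (esub a b).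
Proof.
move=> [ca fa] [cb fb]; split=> [k x|]; first exact: cvgB (ca k x) (cb k x).
apply: (@sub_finite_set _ _ ([set k | exists x, a k x != 0] `|` [set k | exists x, b k x != 0])).
  move=> k [x]; rewrite /esub; have [->|akx _] := eqVneq (a k x) 0; last by left; exists x.
  by rewrite sub0r oppr_eq0 => bkx; right; exists x.
by rewrite finite_setU.
Qed.

Lemma l1norm_fset d (W : {fset int}) :
  (forall k x, k \notin W -> d k x = 0) -> l1norm d = \sum_(k <- W) supnorm (d k).
Proof.
move=> dW; rewrite /l1norm (fsbigTE W) // => k kW.
by apply: (supnorm0 nX) => x; exact: dW.
Qed.

Lemma ler_sum_supnorm_l1norm d (A : {fset int}) : c00 d ->
  \sum_(k <- A) supnorm (d k) <= l1norm d.
Proof.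
move=> cd; rewrite (@l1norm_fset d (A `|` coef_support d)%fset) => [|k x].
  by apply: ler_sum_fsubset; [move=> k; exact: supnorm_ge0 | exact: fsubsetUl].
by rewrite in_fsetU negb_or => /andP[_]; exact: coef_support_out.
Qed.

Lemma ler_coef_l1norm d k x : c00 d -> cabs (d k x) <= l1norm d.
Proof.
move=> cd; apply: le_trans (supnorm_ub cX (cd.1 k) x) _.
by have := ler_sum_supnorm_l1norm [fset k]%fset cd; rewrite big_seq_fset1.
Qed.

End FiniteSupport.

(* [emb f] is convertible to [monomial 0 f]. *)
Definition monomial (R : realType) (X : topologicalType) (m : int) (h : X -> CC R) : elt R X :=
  fun k => if k == m then h else fun=> 0.

Section Monomials.
Variables (R : realType) (X : topologicalType) (sigma sigmai : X -> X).
Hypotheses (hX : hausdorff_space X) (cX : compact [set: X]).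
Local Notation commutant00 := (@commutant00 R X sigma sigmai).

Lemma commutant00_monomial m (h : X -> CC R) : continuous h ->
  (forall y, h y != 0 -> iterz sigma sigmai (- m) y = y) -> commutant00 (monomial m h).
Proof.
move=> ch hfix; apply/(commutant00P sigma sigmai hX cX); split; last first.
  move=> k y; rewrite /monomial; have [->|_] := eqVneq k m; [exact: hfix | by rewrite eqxx].
split=> [k|].
  by rewrite /monomial; case: ifP => _; [exact: ch | exact: cst_continuous].
apply: (@sub_finite_set _ _ [set m]); last exact: finite_set1.
by move=> k [y]; rewrite /monomial; have [//|_] := eqVneq k m; rewrite eqxx.
Qed.

Lemma commutant00_emb1 : commutant00 (emb (fun=> 1)).
Proof.
apply: commutant00_monomial => [|y _]; first exact: cst_continuous.
by rewrite oppr0.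
Qed.

End Monomials.

Lemma omega_x_l1_continuous (R : realType) (X : topologicalType) (sigma sigmai : X -> X)
  (x : X) : compact [set: X] -> [set: X] !=set0 ->
  l1_continuous_on (@commutant00 R X sigma sigmai) (omega_x x).
Proof.
move=> cX nX a [ca _] e e0; exists e => // b [cb _]; apply: le_lt_trans.
exact: ler_coef_l1norm cX nX _ _ _ (c00B cb ca).
Qed.

Section AperiodicPoint.
Variables (R : realType) (X : topologicalType) (sigma sigmai : X -> X).
Hypotheses (hX : hausdorff_space X) (cX : compact [set: X])
  (sigmaK : cancel sigma sigmai) (sigmaiK : cancel sigmai sigma).
Local Notation commutant00 := (@commutant00 R X sigma sigmai).
Variable x : X.
Hypothesis x_aperiodic : ~ (exists q : nat, (0 < q)%N /\ interior (Fix sigma q) x).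

Lemma commutant00_coef_aperiodic a m : commutant00 a -> m != 0 -> a m x = 0.
Proof.
move=> ca m0; apply/eqP; apply: contraT => amx; case: x_aperiodic.
by exists `|m|%N; rewrite absz_gt0; split=> //; exact: commutant00_interior_Fix ca amx.
Qed.

Lemma omega_x_hermitian_character :
  is_hermitian_character sigma sigmai commutant00 (omega_x x).
Proof.
split; last by move=> a _; rewrite /omega_x /estar oppr0.
split=> [//|//|a b ca cb|].
  rewrite /omega_x /emul (fsbigTE [fset 0%Z]%fset) ?big_seq_fset1 => [|k].
    by rewrite subr0 oppr0.
  by rewrite inE => k0; rewrite (commutant00_coef_aperiodic ca k0) mul0r.
by exists (emb (fun=> 1)); [exact: commutant00_emb1 | rewrite /omega_x /emb eqxx oner_eq0].
Qed.

End AperiodicPoint.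

Lemma conjV_norm1 (C : numClosedFieldType) (z : C) : `|z| = 1 -> z^-1^* = z.
Proof. by move=> z1; rewrite invC_norm z1 expr1n invr1 mul1r conjCK. Qed.

Section PeriodicPoint.
Variables (R : realType) (X : topologicalType) (sigma sigmai : X -> X).
Hypotheses (hX : hausdorff_space X) (cX : compact [set: X]) (nX : [set: X] !=set0)
  (sigmaK : cancel sigma sigmai) (sigmaiK : cancel sigmai sigma).
Local Notation elt := (elt R X).
Local Notation commutant00 := (@commutant00 R X sigma sigmai).
Variables (x : X) (n : nat).
Hypotheses (n_gt0 : (0 < n)%N) (x_period : interior (Fix sigma n) x)
  (n_min : forall m : nat, (0 < m)%N -> (m < n)%N -> ~ interior (Fix sigma m) x).
Implicit Types (a b : elt) (c : CC R) (j : int).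

Lemma period_neq0 : n%:Z != 0.
Proof. by rewrite eqz_nat -lt0n. Qed.

Lemma iterzN_mul_period j : iterz sigma sigmai (- (j * n%:Z)) x = x.
Proof. exact: (iterzN_mul_Fix sigmaK sigmaiK j (@interior_subset _ _ x x_period)). Qed.

Lemma commutant00_coef_dvd a m : commutant00 a -> a m x != 0 -> (n%:Z %| m)%Z.
Proof.
move=> ca amx; have g_gt0 : (0 < gcdn n `|m|)%N by rewrite gcdn_gt0 n_gt0.
have xg : interior (Fix sigma (gcdn n `|m|)) x.
  apply: (interiorS (Fix_gcd n_gt0)); rewrite interiorI; split=> //.
  exact: commutant00_interior_Fix ca amx.
have /eqP <- : gcdn n `|m| == n.
  rewrite eqn_leq dvdn_leq ?dvdn_gcdl //= leqNgt; apply/negP => lt_gn.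
  exact: n_min g_gt0 lt_gn xg.
by rewrite dvdzE /= dvdn_gcdr.
Qed.

Definition degrees a : {fset int} := [fset (k %/ n%:Z)%Z | k in coef_support a]%fset.

Lemma degrees_out a : c00 a -> forall j, j \notin degrees a -> a (j * n%:Z) x = 0.
Proof.
move=> ca j ja; apply/eqP; apply: contraNT ja => ajx; apply/imfsetP.
by exists (j * n%:Z); [exact: mem_coef_support ajx | rewrite mulzK ?period_neq0].
Qed.

Lemma omega_xc_fset c a (W : {fset int}) : (forall j, j \notin W -> a (j * n%:Z) x = 0) ->
  omega_xc x n c a = \sum_(j <- W) a (j * n%:Z) x * c ^ j.
Proof. by move=> aW; rewrite /omega_xc (fsbigTE W) // => j /aW ->; rewrite mul0r. Qed.

Lemma omega_xc_monomial c j (h : X -> CC R) :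
  omega_xc x n c (monomial (j * n%:Z) h) = h x * c ^ j.
Proof.
rewrite (@omega_xc_fset c _ [fset j]%fset) ?big_seq_fset1 => [|i]; first by rewrite /monomial eqxx.
by rewrite inE /monomial (inj_eq (mulIf period_neq0)) => /negbTE ->.
Qed.

Lemma degrees_outU a b : c00 a -> c00 b -> forall j, j \notin (degrees a `|` degrees b)%fset ->
  a (j * n%:Z) x = 0 /\ b (j * n%:Z) x = 0.
Proof.
move=> ca cb j; rewrite in_fsetU negb_or => /andP[ja jb].
by rewrite (degrees_out ca ja) (degrees_out cb jb).
Qed.

Lemma omega_xcD c a b : c00 a -> c00 b ->
  omega_xc x n c (eadd a b) = omega_xc x n c a + omega_xc x n c b.
Proof.
move=> ca cb; set W := (degrees a `|` degrees b)%fset.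
have aW j : j \notin W -> a (j * n%:Z) x = 0 by case/(degrees_outU ca cb).
have bW j : j \notin W -> b (j * n%:Z) x = 0 by case/(degrees_outU ca cb).
rewrite (omega_xc_fset c aW) (omega_xc_fset c bW) (@omega_xc_fset c (eadd a b) W) => [|j jW].
  by rewrite -big_split; apply: eq_bigr => j _; rewrite mulrDl.
by rewrite /eadd aW ?bW ?addr0.
Qed.

Lemma omega_xcB c a b : c00 a -> c00 b ->
  omega_xc x n c (esub a b) = omega_xc x n c a - omega_xc x n c b.
Proof.
move=> ca cb; set W := (degrees a `|` degrees b)%fset.
have aW j : j \notin W -> a (j * n%:Z) x = 0 by case/(degrees_outU ca cb).
have bW j : j \notin W -> b (j * n%:Z) x = 0 by case/(degrees_outU ca cb).
rewrite (omega_xc_fset c aW) (omega_xc_fset c bW) (@omega_xc_fset c (esub a b) W) => [|j jW].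
  by rewrite -sumrB; apply: eq_bigr => j _; rewrite mulrBl.
by rewrite /esub aW ?bW ?subr0.
Qed.

Lemma omega_xcZ c l a : c00 a -> omega_xc x n c (escale l a) = l * omega_xc x n c a.
Proof.
move=> ca; have aW := degrees_out ca.
rewrite (omega_xc_fset c aW) (@omega_xc_fset c (escale l a) (degrees a)) => [|j /aW aj].
  by rewrite mulr_sumr; apply: eq_bigr => j _; rewrite /escale mulrA.
by rewrite /escale aj mulr0.
Qed.

Lemma emul_coef_period a b j : commutant00 a -> commutant00 b ->
  emul sigma sigmai a b (j * n%:Z) x =
  \sum_(i <- degrees a) a (i * n%:Z) x * b ((j - i) * n%:Z) x.
Proof.
move=> ca cb; rewrite /emul (fsbigTE [fset i * n%:Z | i in degrees a]%fset) => [|k kA].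
  rewrite big_imfset /= => [|i1 i2 _ _]; last exact: (mulIf period_neq0).
  by apply: eq_bigr => i _; rewrite iterzN_mul_period mulrBl.
have [->|akx] := eqVneq (a k x) 0; first by rewrite mul0r.
case/negP: kA; apply/imfsetP; exists (k %/ n%:Z)%Z.
  by apply/imfsetP; exists k => //; exact: mem_coef_support ca.1 akx.
by rewrite divzK // (commutant00_coef_dvd ca akx).
Qed.

Lemma omega_xcM c a b : c != 0 -> commutant00 a -> commutant00 b ->
  omega_xc x n c (emul sigma sigmai a b) = omega_xc x n c a * omega_xc x n c b.
Proof.
move=> c0 ca cb; set A := degrees a; set B := degrees b.
set J := [fset (i + l)%R | i in A, l in B]%fset.
have bout i j : i \in A -> j \notin J -> b ((j - i) * n%:Z) x = 0.
  move=> iA jJ; apply: (degrees_out cb.1); apply: contra jJ => jiB.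
  by apply/imfset2P; exists i => //; exists (j - i) => //; rewrite addrC subrK.
rewrite (omega_xc_fset c (W := J)) => [|j jJ]; last first.
  by rewrite emul_coef_period //; apply: big1_seq => i /andP[_ iA]; rewrite bout ?mulr0.
rewrite (omega_xc_fset c (W := A)); last exact: degrees_out ca.1.
rewrite (omega_xc_fset c (W := B)); last exact: degrees_out cb.1.
under eq_bigr => j _ do rewrite emul_coef_period // mulr_suml.
rewrite exchange_big /= mulr_suml; apply: eq_big_seq => i iA.
rewrite -(fsbigTE J (fun j => a (i * n%:Z) x * b ((j - i) * n%:Z) x * c ^ j)); last first.
  by move=> j jJ; rewrite bout ?mulr0 ?mul0r.
rewrite (reindex_fsbigT (fun l => l + i)); last first.
  by exists (fun l => l - i) => l; rewrite ?addrK ?subrK.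
rewrite (fsbigTE B) => [|l lB]; last by rewrite addrK (degrees_out cb.1 lB) mulr0 mul0r.
rewrite mulr_sumr; apply: eq_bigr => l _.
by rewrite addrK exprzDr ?unitfE // [c ^ l * c ^ i]mulrC mulrACA.
Qed.

Lemma omega_xc_character c : c != 0 -> is_character sigma sigmai commutant00 (omega_xc x n c).
Proof.
move=> c0; split.
- by move=> a b [ca _] [cb _]; exact: omega_xcD.
- by move=> l a [ca _]; exact: omega_xcZ.
- by move=> a b; exact: omega_xcM.
- exists (emb (fun=> 1)); first exact: commutant00_emb1.
  by have := omega_xc_monomial c 0 (fun=> 1); rewrite mul0r expr0z mulr1 => ->; exact: oner_neq0.
Qed.

Lemma omega_xc_estar c a : c00 a ->
  omega_xc x n c (estar sigma sigmai a) = (omega_xc x n c^-1^* a)^*.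
Proof.
move=> ca; rewrite [LHS]/omega_xc (reindex_fsbigT -%R); last by exists -%R => j; rewrite opprK.
rewrite (fsbigTE (degrees a)) => [|j ja]; last first.
  by rewrite /estar iterzN_mul_period mulNr opprK (degrees_out ca ja) conjC0 mul0r.
rewrite (omega_xc_fset _ (degrees_out ca)) rmorph_sum; apply: eq_bigr => j _.
by rewrite /estar iterzN_mul_period mulNr opprK rmorphM /= fmorphXz /= conjCK exprz_inv.
Qed.

Lemma omega_xc_hermitian_character c : `|c| = 1 ->
  is_hermitian_character sigma sigmai commutant00 (omega_xc x n c).
Proof.
move=> c1; have c0 : c != 0 by rewrite -normr_eq0 c1 oner_neq0.
split; first exact: omega_xc_character.
by move=> a [ca _]; rewrite omega_xc_estar // conjV_norm1.
Qed.

Lemma ler_omega_xc_l1norm c d : `|c| = 1 -> c00 d -> cabs (omega_xc x n c d) <= l1norm d.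
Proof.
move=> c1 cd; rewrite (omega_xc_fset _ (degrees_out cd)).
apply: le_trans (ler_cabs_sum _ _) _.
apply: (le_trans _ (ler_sum_supnorm_l1norm nX [fset j * n%:Z | j in degrees d]%fset cd)).
rewrite [leRHS]big_imfset /= => [|i1 i2 _ _]; last exact: (mulIf period_neq0).
apply: ler_sum => j _; rewrite cabsM cabsXz /cabs c1 /= exp1rz mulr1.
exact: (supnorm_ub cX (cd.1 _) x).
Qed.

Lemma omega_xc_l1_continuous c : `|c| = 1 -> l1_continuous_on commutant00 (omega_xc x n c).
Proof.
move=> c1 a [ca _] e e0; exists e => // b [cb _]; apply: le_lt_trans.
by rewrite -omega_xcB //; exact: ler_omega_xc_l1norm (c00B cb ca).
Qed.

Lemma commutant00_period_monomial j (h : X -> CC R) : continuous h ->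
  (forall t, ~ interior (Fix sigma n) t -> h t = 0) -> commutant00 (monomial (j * n%:Z) h).
Proof.
move=> ch h0; apply: (commutant00_monomial hX cX) => // y hy; apply: iterzN_mul_Fix => //.
have [/interior_subset //|/h0 hy0] := pselect (interior (Fix sigma n) y).
by rewrite hy0 eqxx in hy.
Qed.

Lemma period_bump : exists g : X -> CC R, [/\ continuous g, forall t, cabs (g t) <= 1,
  forall t, ~ interior (Fix sigma n) t -> g t = 0 & g x = 1].
Proof.
have cA : closed (~` (Fix sigma n)°) by apply: open_closedC; exact: open_interior.
have sep : ~` (Fix sigma n)° `&` [set x] = set0.
  by apply/seteqP; split=> t //= [nt tx]; apply: nt; rewrite tx.
have [g [cg g1 g0 gx]] := urysohn_complex R hX cX cA (@closed_set1 _ hX x) sep.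
by exists g; split; [exact: cg | exact: g1 | exact: g0 | exact: gx].
Qed.

Lemma unitary_of_hermitian c : c != 0 ->
  is_hermitian_character sigma sigmai commutant00 (omega_xc x n c) -> `|c| = 1.
Proof.
move=> c0 [_ herm]; have [g [cg _ g0 gx]] := period_bump.
have ca := commutant00_period_monomial 1 cg g0.
have := herm _ ca; rewrite (omega_xc_estar _ ca.1) !omega_xc_monomial gx !mul1r !expr1z conjCK.
move=> cVc; have /eqP : `|c| ^+ 2 = 1 by rewrite normCK -cVc mulfV.
by rewrite sqrp_eq1 // => /eqP.
Qed.

Lemma l1_continuous_powz_bounded c : l1_continuous_on commutant00 (omega_xc x n c) ->
  exists2 eps : R, 0 < eps & forall j : int, eps * cabs c ^ j < 1.
Proof.
move=> cont; pose z : elt := monomial 0 (fun=> 0).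
have z0 k t : z k t = 0 by rewrite /z /monomial; case: ifP.
have cz : commutant00 z.
  by apply: (commutant00_monomial hX cX) => [|y]; [exact: cst_continuous | rewrite eqxx].
have omega_z : omega_xc x n c z = 0 by rewrite /omega_xc fsbig1 // => j _; rewrite z0 mul0r.
have [d d0 hd] := cont z cz 1 ltr01; have e0 : 0 < d / 2 by rewrite divr_gt0.
have [g [cg g1 g0 gx]] := period_bump; exists (d / 2) => // j.
pose h : X -> CC R := fun t => (d / 2)%:C%C * g t.
have ch : continuous h by move=> t; apply: cvgM; [exact: cvg_cst | exact: cg].
have h0 t : ~ interior (Fix sigma n) t -> h t = 0 by move=> nt; rewrite /h g0 ?mulr0.
have := hd _ (commutant00_period_monomial j ch h0).
rewrite omega_xc_monomial omega_z subr0 /h gx mulr1 cabsM cabsXz (ger0_cabs (ltW e0)); apply.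
rewrite (l1norm_fset nX (W := [fset j * n%:Z]%fset)) ?big_seq_fset1 => [|k t]; last first.
  by rewrite inE /esub /monomial z0 subr0 => /negbTE ->.
have half_lt : d / 2 < d by rewrite ltr_pdivrMr // ltr_pMr // ltr1n.
apply: (le_lt_trans _ half_lt); apply: (supnorm_le nX) => t.
rewrite /esub /monomial eqxx z0 subr0 /h cabsM (ger0_cabs (ltW e0)).
exact: (ler_piMr (ltW e0) (g1 t)).
Qed.

Lemma unitary_of_l1_continuous c : c != 0 ->
  l1_continuous_on commutant00 (omega_xc x n c) -> `|c| = 1.
Proof.
move=> c0 /l1_continuous_powz_bounded[eps e0 hb].
by rewrite normr_cabs (powz_bounded_eq1 _ e0 hb) // lt0r cabs_eq0 c0 cabs_ge0.
Qed.

End PeriodicPoint.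

Theorem lemma3p7 (R : realType) (X : topologicalType) (sigma sigmai : X -> X) :
  hausdorff_space X -> compact [set: X] -> [set: X] !=set0 ->
  continuous sigma -> continuous sigmai ->
  cancel sigma sigmai -> cancel sigmai sigma ->
  (forall x : X,
     ~ (exists q : nat, (0 < q)%N /\ interior (Fix sigma q) x) ->
     is_hermitian_character sigma sigmai (@commutant00 R X sigma sigmai) (@omega_x R X x) /\
     l1_continuous_on (@commutant00 R X sigma sigmai) (@omega_x R X x)) /\
  (forall (x : X) (n : nat) (c : CC R),
     (0 < n)%N -> interior (Fix sigma n) x ->
     (forall m : nat, (0 < m)%N -> (m < n)%N -> ~ interior (Fix sigma m) x) ->
     c != 0 ->
     (l1_continuous_on (@commutant00 R X sigma sigmai) (omega_xc x n c) <->
      is_hermitian_character sigma sigmai (@commutant00 R X sigma sigmai) (omega_xc x n c)) /\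
     (is_hermitian_character sigma sigmai (@commutant00 R X sigma sigmai) (omega_xc x n c) <->
      `|c| = 1)).
Proof.
move=> hX cX nX _ _ sigmaK sigmaiK; split=> [x x_aperiodic | x n c n_gt0 x_period n_min c0].
  split; first exact: omega_x_hermitian_character.
  exact: omega_x_l1_continuous.
have herm_of_unit :=
  omega_xc_hermitian_character hX cX sigmaK sigmaiK n_gt0 x_period n_min (c := c).
have unit_of_herm := unitary_of_hermitian hX cX sigmaK sigmaiK n_gt0 x_period c0.
have unit_of_cont := unitary_of_l1_continuous hX cX nX sigmaK sigmaiK n_gt0 x_period c0.
have cont_of_unit :=
  omega_xc_l1_continuous (sigma := sigma) (sigmai := sigmai) cX nX x n_gt0 (c := c).
split; split.
- by move/unit_of_cont/herm_of_unit.
- by move/unit_of_herm/cont_of_unit.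
- exact: unit_of_herm.
- exact: herm_of_unit.
Qed.
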